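(* Let $I\subseteq\mathbb{R}$ be an interval, let $f:I\to\mathbb{R}$ be differentiable on the interior $I^\circ$ of $I$, and let $a,b\in I$ with $a<b$ and $f'\in L^1[a,b]$. Let $s\in(0,1]$, $\alpha\in[0,1]$, $m\in(0,1]$, assume $b/m\in I^\circ$, and let $q>1$ and $p=\frac{q}{q-1}$. If $|f'|^q$ is $s$-$(\alpha,m)$-convex (in the first sense) on $[a,b]$, then $$\left|\frac{f(a)+f(b)}{2}-\frac{1}{b-a}\int_a^b f(x)\,dx\right|\le \frac{b-a}{2^{\frac{p+1}{p}}}\left[v_1|f'(a)|^q+v_2\left|f'\!\left(\frac{b}{m}\right)\right|^q\right]^{1/q},$$ where $v_1=\dfrac{1+2^{\alpha s}(\alpha s)}{2^{\alpha s}(\alpha s+1)(\alpha s+2)}$ and $v_2=m\left(\frac12-v_1\right)$.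
   Context: Let $s\in(0,1]$, $\alpha\in[0,1]$, $m\in(0,1]$. A nonnegative function $g$ is called $s$-$(\alpha,m)$-convex (in the first sense) on $[a,b]$ if for all $x,y\in[a,b]$ (with $y/m$ in the domain of $g$) and all $t\in[0,1]$, $$g(tx+(1-t)y)\le t^{\alpha s}g(x)+m\,(1-t^{\alpha s})\,g\!\left(\frac{y}{m}\right).$$ *)

From HB Require Import structures.
From mathcomp Require Import all_boot all_order all_algebra.
From mathcomp Require Import all_classical all_reals all_analysis.
Set Implicit Arguments. Unset Strict Implicit. Unset Printing Implicit Defensive.
Import Order.TTheory GRing.Theory Num.Theory.
Import numFieldNormedType.Exports.
Local Open Scope classical_set_scope.
Local Open Scope ring_scope.

(* s-(alpha,m)-convexity in the first sense of a nonnegative function g on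
   [a,b]; D is the domain of g (used for the side condition "y/m in the
   domain of g").  t^(alpha s) uses powR, with 0 `^ 0 = 1 and 0 `^ r = 0
   for r <> 0. *)
Definition s_alpha_m_convex {R : realType} (s alpha m : R) (D : set R)
  (g : R -> R) (a b : R) : Prop :=
  (forall x, a <= x <= b -> 0 <= g x) /\
  (forall x y t, a <= x <= b -> a <= y <= b -> D (y / m) -> 0 <= t <= 1 ->
     g (t * x + (1 - t) * y) <=
       t `^ (alpha * s) * g x + m * (1 - t `^ (alpha * s)) * g (y / m)).

(* Let c = (a + b) / 2 and let k bound |f'| on (a, b).  If G' x = (x - c) k x, then for
   s = 1 and s = -1 the function x |-> s ((x - c) f x - \int_a^x f) - G x on [c, b], and the
   same function with + G x on [a, c], have derivative s (x - c) f' x - |x - c| k x <= 0.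
   Comparing their endpoint values bounds the trapezoid rest
   (b - a) / 2 (f a + f b) - \int_a^b f by G a - 2 G c + G b, without integrating f'.
   For y > 0, Young's inequality y |f'| <= |f'|^q / q + y^p / p combined with the
   s-(alpha,m)-convexity of |f'|^q at x = t a + (1 - t) b gives such a bound
   k x = a0 + b0 t^(alpha s), for which G a - 2 G c + G b = (b - a)^2 (a0 / 4 + b0 v1 / 2).
   Hence 4 E / (b - a) <= (2 V / q + y^p / p) / y, where E is the left-hand side and
   V = v1 |f' a|^q + v2 |f' (b/m)|^q; the infimum over y, attained at y = (2 V)^(1/p),
   is (2 V)^(1/q). *)

From HB Require Import structures.
From mathcomp Require Import all_boot all_order all_algebra.
From mathcomp Require Import all_classical all_reals all_analysis.
From mathcomp Require Import ring lra.
Import Order.TTheory GRing.Theory Num.Theory.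
Import numFieldNormedType.Exports.
Local Open Scope classical_set_scope.
Local Open Scope ring_scope.
Set Implicit Arguments. Unset Strict Implicit. Unset Printing Implicit Defensive.

Section Trapezoid.
Context {R : realType}.
Local Notation mu := (@lebesgue_measure R).

Lemma midpoint_rest_nincr (f F G g : R -> R) (c u v s : R) : u < v -> `|s| <= 1 ->
  {within `[u, v], continuous f} -> {within `[u, v], continuous F} ->
  {within `[u, v], continuous G} ->
  (forall x, u < x < v -> derivable f x 1) ->
  (forall x, u < x < v -> is_derive x 1 F (f x)) ->
  (forall x, u < x < v -> is_derive x 1 G (g x)) ->
  (forall x, u < x < v -> `|x - c| * `|derive1 f x| <= g x) ->
  s * ((v - c) * f v - F v) - G v <= s * ((u - c) * f u - F u) - G u.
Proof.
move=> uv s1 cf cF cG df dF dG fg.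
pose H x := s * ((x - c) * f x - F x) - G x.
have dH x : u < x < v -> is_derive x 1 H (s * ((x - c) * derive1 f x) - g x).
  move=> xuv; have /derivableP dfx := df x xuv.
  have dFx := dF x xuv; have dGx := dG x xuv.
  by apply: is_derive_eq; rewrite derive1E /GRing.scale /=; ring.
have cH : {within `[u, v], continuous H}.
  move=> x; apply: cvgB (cG x); apply: cvgM (cvg_cst _) _; apply: cvgB (cF x).
  apply: cvgM (cf x); apply: cvgB (cvg_cst _).
  exact: continuous_subspaceT (fun y => cvg_id) x.
have H'_le0 x : x \in `]u, v[ -> derive1 H x <= 0.
  rewrite in_itv /= => xuv; rewrite derive1E; have [_ ->] := dH x xuv.
  rewrite subr_le0; apply: le_trans (fg x xuv); apply: le_trans (ler_norm _) _.
  by rewrite !normrM ler_piMl ?mulr_ge0.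
have H_derivable x : x \in `]u, v[ -> derivable H x 1.
  by rewrite in_itv /= => /dH [].
have H_nincr := ler0_derive1_le_cc H_derivable H'_le0 cH.
by apply: H_nincr; rewrite ?in_itv /= ?lexx ?ltW.
Qed.

Lemma midpoint_rest_le (f F G k : R -> R) (a b s : R) : a < b -> `|s| <= 1 ->
  {within `[a, b], continuous f} -> {within `[a, b], continuous F} ->
  {within `[a, b], continuous G} ->
  (forall x, a < x < b -> derivable f x 1) ->
  (forall x, a < x < b -> is_derive x 1 F (f x)) ->
  (forall x, a < x < b -> is_derive x 1 G ((x - (a + b) / 2) * k x)) ->
  (forall x, a < x < b -> `|derive1 f x| <= k x) ->
  F a = 0 ->
  s * ((b - a) / 2 * (f a + f b) - F b) <= G a - 2 * G ((a + b) / 2) + G b.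
Proof.
move=> ab s1 cf cF cG df dF dG fk Fa.
set c := (a + b) / 2.
have ac : a < c by rewrite /c ltr_pdivlMr // mulrDr mulr1 ltrD2l.
have cb : c < b by rewrite /c ltr_pdivrMr // mulrDr mulr1 ltrD2r.
have on_ac x : a < x < c -> a < x < b by case/andP=> ? ?; apply/andP; split; lra.
have on_cb x : c < x < b -> a < x < b by case/andP=> ? ?; apply/andP; split; lra.
have within_ac (h : R -> R) : {within `[a, b], continuous h} -> {within `[a, c], continuous h}.
  by apply: continuous_subspaceW; apply: subset_itv; rewrite bnd_simp ?lexx ?ltW.
have within_cb (h : R -> R) : {within `[a, b], continuous h} -> {within `[c, b], continuous h}.
  by apply: continuous_subspaceW; apply: subset_itv; rewrite bnd_simp ?lexx ?ltW.
have right_half : s * ((b - c) * f b - F b) - G b <= s * ((c - c) * f c - F c) - G c.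
  apply: (midpoint_rest_nincr cb s1 (within_cb _ cf) (within_cb _ cF) (within_cb _ cG)).
  - by move=> x /on_cb; exact: df.
  - by move=> x /on_cb; exact: dF.
  - by move=> x /on_cb; exact: dG.
  move=> x /[dup] /on_cb xab /andP[cx _].
  by rewrite gtr0_norm ?subr_gt0 // ler_pM2l ?subr_gt0 // fk.
have left_half : s * ((c - c) * f c - F c) - - G c <= s * ((a - c) * f a - F a) - - G a.
  apply: (midpoint_rest_nincr (G := fun x => - G x) ac s1 (within_ac _ cf) (within_ac _ cF)).
  - by move=> x; apply: cvgN; exact: (within_ac _ cG).
  - by move=> x /on_ac; exact: df.
  - by move=> x /on_ac; exact: dF.
  - by move=> x /on_ac/dG; exact: is_deriveN.
  move=> x /[dup] /on_ac xab /andP[_ xc].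
  by rewrite ltr0_norm ?subr_lt0 // mulNr lerN2 ler_nM2l ?subr_lt0 // fk.
have -> : (b - a) / 2 * (f a + f b) - F b = ((b - c) * f b - F b) - (a - c) * f a.
  by rewrite /c; field.
rewrite Fa subrr !mul0r in left_half right_half *; lra.
Qed.

Lemma trapezoid_rest_le (f k G : R -> R) (a b : R) : a < b ->
  (forall x, a <= x <= b -> derivable f x 1) ->
  (forall x, a < x < b -> `|derive1 f x| <= k x) ->
  (forall x, a < x < b -> is_derive x 1 G ((x - (a + b) / 2) * k x)) ->
  {within `[a, b], continuous G} ->
  `|(b - a) / 2 * (f a + f b) - \int[mu]_(x in `[a, b]) f x|
    <= G a - 2 * G ((a + b) / 2) + G b.
Proof.
move=> ab df fk dG cG.
have df' x : a < x < b -> derivable f x 1.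
  by case/andP=> ax xb; apply: df; rewrite !ltW.
pose F x := \int[mu]_(t in `[a, x]) f t.
have cf : {within `[a, b], continuous f}.
  by apply: derivable_within_continuous => x; rewrite in_itv; exact: df.
have intf : mu.-integrable `[a, b] (EFin \o f).
  exact: continuous_compact_integrable (@segment_compact _ a b) cf.
have dF x : a < x < b -> is_derive x 1 F (f x).
  move=> xab; have /andP[ax xb] := xab.
  have fx : {for x, continuous f}.
    exact/differentiable_continuous/derivable1_diffP/df'.
  have [dFx F'x] := continuous_FTC1_closed xb intf ax fx.
  by split; [exact: dFx | rewrite -derive1E].
have cF : {within `[a, b], continuous F}.
  exact: parameterized_integral_continuous (ltW ab) intf.
have Fa : F a = 0 by rewrite /F set_itv1 Rintegral_set1.
have rest_le s : `|s| <= 1 ->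
    s * ((b - a) / 2 * (f a + f b) - F b) <= G a - 2 * G ((a + b) / 2) + G b.
  by move=> s1; exact: midpoint_rest_le ab s1 cf cF cG df' dF dG fk Fa.
have := rest_le (-1); have := rest_le 1; rewrite normrN normr1 mulN1r mul1r.
by move=> /(_ (lexx 1)) ub /(_ (lexx 1)) lb; rewrite ler_norml -lerNl lb ub.
Qed.

Lemma cvg_at_left_rescale (b L : R) : 0 < L -> (fun y => (b - y) / L) @ b^'- --> (0:R)^'+.
Proof.
move=> L0 A A0.
have : \forall y \near b^'-, 0 < (b - y) / L -> A ((b - y) / L).
  apply: (cvg_at_left_filter _) A0.
  rewrite -[X in _ --> X](mul0r L^-1) -(subrr b).
  by apply: cvgM; [apply: cvgB; [exact: cvg_cst | exact: cvg_id] | exact: cvg_cst].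
apply: filter_app; near=> y; apply.
by rewrite divr_gt0 // subr_gt0; near: y; exact: nbhs_left_lt.
Unshelve. all: by end_near. Qed.

Definition midpoint_primitive (r a0 b0 t : R) : R :=
  a0 * (t * t - t) / 2 + b0 * (t `^ (r + 2) / (r + 2) - t `^ (r + 1) / (2 * (r + 1))).

(* [trapezoid_weight r] is \int_0^1 |1 - 2 t| t^r dt, the constant v1 of the theorem. *)
Definition trapezoid_weight (r : R) : R :=
  (1 + 2 `^ r * r) / (2 `^ r * (r + 1) * (r + 2)).

Section MidpointPrimitive.
Variables (r a0 b0 : R).
Hypothesis r_ge0 : 0 <= r.

Let r1_neq0 : r + 1 != 0. Proof. by rewrite gt_eqF // ltr_wpDl. Qed.
Let r2_neq0 : r + 2 != 0. Proof. by rewrite gt_eqF // ltr_wpDl. Qed.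

Lemma is_derive_midpoint_primitive (t : R) : 0 < t ->
  is_derive t 1 (midpoint_primitive r a0 b0) ((t - 2^-1) * (a0 + b0 * t `^ r)).
Proof.
move=> t0; have d1 := is_derive1_powR (r + 1) t0; have d2 := is_derive1_powR (r + 2) t0.
apply: is_derive_eq.
rewrite /GRing.scale /= !addrK.
have -> : r + 2 - 1 = r + 1 by ring.
have -> : t `^ (r + 1) = t `^ r * t.
  by rewrite powRD ?powRr1 ?(ltW t0) ?(gt_eqF t0) ?implybT.
by field; rewrite r1_neq0 r2_neq0.
Qed.

Lemma midpoint_primitive_cvg0 :
  midpoint_primitive r a0 b0 t @[t --> (0 : R)^'+] --> midpoint_primitive r a0 b0 0.
Proof.
have cvg_t : (fun t : R => t) @ 0^'+ --> (0 : R) := cvg_at_right_filter cvg_id.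
rewrite /midpoint_primitive !powR0 //.
apply: cvgD; apply: cvgM; try exact: cvg_cst.
  apply: cvgM; first exact: cvg_cst.
  by apply: cvgB; [exact: cvgM | exact: cvg_t].
apply: cvgB; (apply: cvgM; last exact: cvg_cst); apply: powR_cvg0; exact: ltr_wpDl.
Qed.

Lemma midpoint_primitive_eval :
  midpoint_primitive r a0 b0 1 - 2 * midpoint_primitive r a0 b0 2^-1
    + midpoint_primitive r a0 b0 0 = a0 / 4 + b0 * trapezoid_weight r / 2.
Proof.
have powR2_neq0 e : (2 : R) `^ e != 0 by rewrite gt_eqF // powR_gt0.
have powR_half e : (2^-1 : R) `^ e = (2 `^ e)^-1.
  apply: (mulIf (powR2_neq0 e)); rewrite -powRM ?invr_ge0 ?ltW //.
  by rewrite mulVf ?gt_eqF // powR1 mulVf.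
have powR2S e n : (2 : R) `^ (e + n%:R) = 2 `^ e * 2 ^+ n.
  rewrite powRD; last by rewrite pnatr_eq0 implybT.
  by rewrite powR_mulrn ?ler0n.
rewrite /midpoint_primitive /trapezoid_weight powR1 !powR0 // !powR_half.
rewrite (powR2S r 2) (powR2S r 1).
by field; rewrite powR2_neq0 r1_neq0 r2_neq0.
Qed.
End MidpointPrimitive.

Lemma trapezoid_weight_ge0 (r : R) : 0 <= r -> 0 <= trapezoid_weight r.
Proof.
move=> r0; have pow_ge0 := powR_ge0 2 r; rewrite /trapezoid_weight.
by apply: divr_ge0; [|apply: mulr_ge0; [apply: mulr_ge0|]]; nra.
Qed.

Lemma trapezoid_weight_le_half (r : R) : 0 <= r -> trapezoid_weight r <= 2^-1.
Proof.
move=> r0; have pow_ge1 : 1 <= (2 : R) `^ r.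
  by have := ler_powR (ler1n R 2) r0; rewrite powRr0.
rewrite /trapezoid_weight ler_pdivrMr ?mulr_gt0 ?powR_gt0 ?ltr_wpDl //.
nra.
Qed.

Lemma subset_itvcc_interior (I : set R) (a b : R) : is_interval I -> I° a -> I° b ->
  `[a, b] `<=` I°.
Proof.
move=> Iint Ia Ib x /=; rewrite in_itv /= => /andP[ax xb].
have [->|xa] := eqVneq x a; first exact: Ia.
have [->|xb'] := eqVneq x b; first exact: Ib.
have Iab : `]a, b[ `<=` I.
  move=> z /=; rewrite in_itv /= => /andP[az zb].
  by apply: (Iint a b (nbhs_singleton Ia) (nbhs_singleton Ib)); rewrite !ltW.
apply: (filterS Iab); apply: open_nbhs_nbhs; split; first exact: interval_open.
by rewrite /= in_itv /= !lt_neqAle eq_sym xa ax xb' xb.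
Qed.

Lemma le_powR_young_inf (E W p q : R) : 0 < p -> 0 < q -> p^-1 + q^-1 = 1 ->
  (forall y, 0 < y -> E <= (W / q + y `^ p / p) / y) -> E <= W `^ q^-1.
Proof.
move=> p0 q0 pq Ey.
have powR_divr (y e : R) : 0 < y -> y `^ e / y = y `^ (e - 1).
  move=> y0; rewrite powRB; last by rewrite (gt_eqF y0) implybT.
  by rewrite powRr1 // ltW.
have [W0|W0] := lerP W 0.
  have p1 : 0 < p - 1.
    by rewrite subr_gt0 -invf_lt1 // -pq ltrDl invr_gt0.
  apply: le_trans (powR_ge0 _ _); apply/ler_addgt0Pr => e e0; rewrite add0r.
  pose y := (p * e) `^ (p - 1)^-1.
  have y0 : 0 < y by rewrite powR_gt0 ?mulr_gt0.
  have ype : y `^ p / y = p * e.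
    by rewrite powR_divr // -powRrM mulVf ?gt_eqF // powRr1 // mulr_ge0 ?ltW.
  apply: le_trans (Ey y y0) _.
  have -> : (W / q + y `^ p / p) / y = W / (q * y) + e.
    by rewrite -[e](mulKf (lt0r_neq0 p0)) -ype; field; rewrite !gt_eqF.
  by rewrite gerDr mulr_le0_ge0 // invr_ge0 mulr_ge0 ?ltW.
pose y := W `^ p^-1.
have y0 : 0 < y by rewrite powR_gt0.
have yp : y `^ p = W by rewrite -powRrM mulVf ?gt_eqF // powRr1 // ltW.
apply: le_trans (Ey y y0) _; rewrite yp -mulrDr addrC pq mulr1.
have -> : q^-1 = 1 - p^-1 by rewrite -pq; ring.
rewrite powRB ?powRr1 ?(ltW W0) //.
by rewrite (gt_eqF W0) implybT.
Qed.

Lemma trapezoid_rest_le_powR_weight (f : R -> R) (a b r a0 b0 : R) :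
  a < b -> 0 <= r ->
  (forall x, a <= x <= b -> derivable f x 1) ->
  (forall x, a < x < b -> `|derive1 f x| <= a0 + b0 * ((b - x) / (b - a)) `^ r) ->
  `|(b - a) / 2 * (f a + f b) - \int[mu]_(x in `[a, b]) f x|
    <= (b - a) ^+ 2 * (a0 / 4 + b0 * trapezoid_weight r / 2).
Proof.
move=> ab r0 df fk.
set L := b - a; have L0 : 0 < L by rewrite subr_gt0.
pose t x := (b - x) / L.
pose P := midpoint_primitive r a0 b0.
pose G x := L ^+ 2 * P (t x).
have dG x : x < b -> is_derive x 1 G ((x - (a + b) / 2) * (a0 + b0 * t x `^ r)).
  move=> xb; have t0 : 0 < t x by rewrite divr_gt0 // subr_gt0.
  have dP := is_derive_midpoint_primitive a0 b0 r0 t0.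
  have dt : is_derive x 1 t (- L^-1).
    by apply: is_derive_eq; rewrite /GRing.scale /=; ring.
  have dPt := is_derive1_comp dP dt.
  apply: is_derive_eq.
  by rewrite /GRing.scale /= /t /L; field; rewrite subr_eq0 gt_eqF.
have cG : {within `[a, b], continuous G}.
  apply/(continuous_within_itvP _ ab); split.
  - move=> x; rewrite in_itv /= => /andP[_ xb].
    by have [/derivable1_diffP/differentiable_continuous] := dG x xb.
  - apply: cvg_at_right_filter.
    by have [/derivable1_diffP/differentiable_continuous] := dG a ab.
  - rewrite /G /t subrr mul0r; apply: cvgM; first exact: cvg_cst.
    apply: (cvg_comp (fun y => (b - y) / L) P (cvg_at_left_rescale b L0)).
    exact: midpoint_primitive_cvg0.
have ta : t a = 1 by rewrite /t divff ?gt_eqF.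
have tc : t ((a + b) / 2) = 2^-1 by rewrite /t /L; field; rewrite subr_eq0 gt_eqF.
have tb : t b = 0 by rewrite /t subrr mul0r.
have -> : L ^+ 2 * (a0 / 4 + b0 * trapezoid_weight r / 2) =
    G a - 2 * G ((a + b) / 2) + G b.
  by rewrite /G ta tc tb -(midpoint_primitive_eval a0 b0 r0) /P; ring.
apply: (trapezoid_rest_le ab df _ _ cG); first exact: fk.
by move=> x /andP[_ xb]; exact: dG.
Qed.

Lemma young_convex_bound (g : R -> R) (D : set R) (a b s alpha m p q y x : R) :
  a < b -> 0 < p -> 0 < q -> p^-1 + q^-1 = 1 -> 0 < y -> D (b / m) ->
  s_alpha_m_convex s alpha m D (fun z => g z `^ q) a b ->
  0 <= g x -> a < x < b ->
  g x <= (m * g (b / m) `^ q / q + y `^ p / p) / y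
         + (g a `^ q - m * g (b / m) `^ q) / (q * y) * ((b - x) / (b - a)) `^ (alpha * s).
Proof.
move=> ab p0 q0 pq y0 Dbm [_ cvx] gx0 /andP[ax xb].
set t := (b - x) / (b - a).
have t01 : 0 <= t <= 1.
  have ba : 0 < b - a by rewrite subr_gt0.
  by rewrite /t divr_ge0 ?ler_pdivrMr //= ?mul1r; lra.
have a_ab : a <= a <= b by rewrite lexx ltW.
have b_ab : a <= b <= b by rewrite lexx ltW.
have := cvx a b t a_ab b_ab Dbm t01.
have -> : t * a + (1 - t) * b = x by rewrite /t; field; rewrite subr_eq0 gt_eqF.
move=> convex_bound.
have young : g x * y <= g x `^ q / q + y `^ p / p.
  by apply: conjugate_powR => //; [exact: ltW | rewrite addrC].
set T := t `^ (alpha * s) in convex_bound *.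
have -> : (m * g (b / m) `^ q / q + y `^ p / p) / y
    + (g a `^ q - m * g (b / m) `^ q) / (q * y) * T
    = ((T * g a `^ q + m * (1 - T) * g (b / m) `^ q) / q + y `^ p / p) / y.
  by field; rewrite !gt_eqF.
rewrite ler_pdivlMr //; apply: le_trans young _.
by rewrite lerD2r ler_pM2r ?invr_gt0.
Qed.

Lemma powR_conjugate_exponent (x q : R) : 0 < x -> 1 < q ->
  x `^ ((q / (q - 1) + 1) / (q / (q - 1))) = x ^+ 2 / x `^ q^-1.
Proof.
move=> x0 q1; have q1_neq0 : q - 1 != 0 by rewrite subr_eq0 gt_eqF.
have -> : (q / (q - 1) + 1) / (q / (q - 1)) = 2 - q^-1.
  by field; rewrite q1_neq0 gt_eqF // (lt_trans ltr01).
rewrite powRB; last by rewrite (gt_eqF x0) implybT.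
by rewrite powR_mulrn // ltW.
Qed.

Lemma trapezoid_rest_young (f : R -> R) (D : set R) (a b s alpha m p q y : R) :
  a < b -> 0 <= alpha * s -> 0 < p -> 0 < q -> p^-1 + q^-1 = 1 -> 0 < y ->
  D (b / m) -> (forall x, a <= x <= b -> derivable f x 1) ->
  s_alpha_m_convex s alpha m D (fun x => `|derive1 f x| `^ q) a b ->
  4 * `|(f a + f b) / 2 - (b - a)^-1 * \int[mu]_(x in `[a, b]) f x| / (b - a)
    <= (2 * (trapezoid_weight (alpha * s) * `|derive1 f a| `^ q
             + m * (2^-1 - trapezoid_weight (alpha * s)) * `|derive1 f (b / m)| `^ q) / q
        + y `^ p / p) / y.
Proof.
move=> ab r0 p0 q0 pq y0 Dbm df cvx.
set v1 := trapezoid_weight (alpha * s).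
set A := `|derive1 f a| `^ q; set B := `|derive1 f (b / m)| `^ q.
have L0 : 0 < b - a by rewrite subr_gt0.
pose a0 := (m * B / q + y `^ p / p) / y.
pose b0 := (A - m * B) / (q * y).
have fk x : a < x < b -> `|derive1 f x| <= a0 + b0 * ((b - x) / (b - a)) `^ (alpha * s).
  exact: young_convex_bound ab p0 q0 pq y0 Dbm cvx (normr_ge0 _).
have rest_le := trapezoid_rest_le_powR_weight ab r0 df fk.
rewrite (_ : (f a + f b) / 2 - _ = (b - a)^-1 *
    ((b - a) / 2 * (f a + f b) - \int[mu]_(x in `[a, b]) f x)); last first.
  by field; rewrite gt_eqF.
rewrite normrM gtr0_norm ?invr_gt0 // mulrAC mulrA.
have c_ge0 : 0 <= 4 * (b - a)^-1 / (b - a) by rewrite !mulr_ge0 ?invr_ge0 ?ltW.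
apply: le_trans (ler_wpM2l c_ge0 rest_le) _; rewrite le_eqVlt; apply/orP; left.
by apply/eqP; rewrite /a0 /b0 -/v1; field; rewrite !gt_eqF.
Qed.

End Trapezoid.

Theorem theorem3 (R : realType) (I : set R) (f : R -> R) (a b s alpha m q : R) :
  is_interval I ->
  (forall x, I° x -> derivable f x 1) ->
  I° a -> I° b -> a < b ->
  (lebesgue_measure : measure _ R).-integrable `[a, b] (EFin \o (derive1 f)) ->
  0 < s <= 1 -> 0 <= alpha <= 1 -> 0 < m <= 1 ->
  I° (b / m) -> 1 < q ->
  s_alpha_m_convex s alpha m I° (fun x => `|(derive1 f) x| `^ q) a b ->
  let p := q / (q - 1) in
  let v1 := (1 + 2 `^ (alpha * s) * (alpha * s)) /
            (2 `^ (alpha * s) * (alpha * s + 1) * (alpha * s + 2)) in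
  let v2 := m * (2^-1 - v1) in
  `| (f a + f b) / 2 - (b - a)^-1 * \int[lebesgue_measure]_(x in `[a, b]) f x |
    <= (b - a) / 2 `^ ((p + 1) / p) *
       (v1 * `|(derive1 f) a| `^ q + v2 * `|(derive1 f) (b / m)| `^ q) `^ q^-1.
Proof.
move=> Iint dfI Ia Ib ab _ /andP[s0 _] /andP[alpha0 _] /andP[m0 _] Ibm q1 cvx.
cbv zeta; set p := q / (q - 1); set v1 := (1 + _) / _; set v2 := m * _.
set A := `|derive1 f a| `^ q; set B := `|derive1 f (b / m)| `^ q.
set V := v1 * A + v2 * B; set E := `|_ - _|.
have r0 : 0 <= alpha * s := mulr_ge0 alpha0 (ltW s0).
have q0 : 0 < q := lt_trans ltr01 q1.
have q1_neq0 : q - 1 != 0 by rewrite subr_eq0 gt_eqF.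
have p0 : 0 < p by rewrite divr_gt0 // subr_gt0.
have pq : p^-1 + q^-1 = 1 by rewrite /p; field; rewrite q1_neq0 gt_eqF.
have L0 : 0 < b - a by rewrite subr_gt0.
have df x : a <= x <= b -> derivable f x 1.
  by move=> xab; apply/dfI/(subset_itvcc_interior Iint Ia Ib); rewrite /= in_itv.
have V0 : 0 <= V.
  have v1_ge0 : 0 <= v1 := trapezoid_weight_ge0 r0.
  have v1_le_half : v1 <= 2^-1 := trapezoid_weight_le_half r0.
  have v2_ge0 : 0 <= v2 by apply: mulr_ge0; [exact: ltW | rewrite subr_ge0].
  by apply: addr_ge0; apply: mulr_ge0; rewrite // powR_ge0.
have bound : 4 * E / (b - a) <= (2 * V) `^ q^-1 := le_powR_young_inf p0 q0 pq
  (fun y y0 => trapezoid_rest_young ab r0 p0 q0 pq y0 Ibm df cvx).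
rewrite powRM ?ler0n // in bound; rewrite powR_conjugate_exponent //.
have two_powR_gt0 : 0 < (2 : R) `^ q^-1 by rewrite powR_gt0.
rewrite -(@ler_pM2l _ (4 / (b - a))) ?divr_gt0 // mulrAC; apply: le_trans bound _.
rewrite le_eqVlt; apply/orP; left; apply/eqP.
by field; rewrite !gt_eqF.
Qed.
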